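(* Let $(T_0,\widetilde T_0)$ be a joint pair of closed abstract Friedrichs operators on a complex Hilbert space $\mathcal{H}$, and let $T_1:=\widetilde T_0^*$, $\widetilde T_1:=T_0^*$, $\mathcal{W}_0:=\operatorname{dom}T_0=\operatorname{dom}\widetilde T_0$ and $\mathcal{W}:=\operatorname{dom}T_1=\operatorname{dom}\widetilde T_1$. Then $$\mathcal{W}=\mathcal{W}_0\dotplus\operatorname{ker}T_1\dotplus\operatorname{ker}\widetilde T_1,$$ i.e. every $u\in\mathcal{W}$ can be written uniquely as $u=u_0+\nu+\tilde\nu$ with $u_0\in\mathcal{W}_0$, $\nu\in\operatorname{ker}T_1$, $\tilde\nu\in\operatorname{ker}\widetilde T_1$.
   Context: $\mathcal{H}$ is a complex Hilbert space with inner product $\langle\cdot,\cdot\rangle$ (linear in the first argument) and norm $\|\cdot\|$. A pair $(T,\widetilde T)$ of densely defined linear operators on $\mathcal{H}$ is a joint pair of abstract Friedrichs operators if: (T1) $T$ and $\widetilde T$ have a common dense domain $\mathcal{D}$ and $\langle T\varphi,\psi\rangle=\langle\varphi,\widetilde T\psi\rangle$ for all $\varphi,\psi\in\mathcal{D}$; (T2) there is $c>0$ with $\|(T+\widetilde T)\varphi\|\le c\|\varphi\|$ for all $\varphi\in\mathcal{D}$; (T3) there is $\mu_0>0$ with $\langle (T+\widetilde T)\varphi,\varphi\rangle\ge 2\mu_0\|\varphi\|^2$ for all $\varphi\in\mathcal{D}$. A joint pair of closed abstract Friedrichs operators is such a pair $(T_0,\widetilde T_0)$ in which both operators are closed. For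 such a pair one has $T_0\subseteq T_1$, $\widetilde T_0\subseteq\widetilde T_1$ and $\operatorname{dom}T_1=\operatorname{dom}\widetilde T_1$. *)

From HB Require Import structures.
From mathcomp Require Import all_boot all_order all_algebra.
From mathcomp Require Import complex.
From mathcomp Require Import reals.
Set Implicit Arguments. Unset Strict Implicit. Unset Printing Implicit Defensive.
Import Order.TTheory GRing.Theory Num.Theory.
Local Open Scope ring_scope.
Local Open Scope complex_scope.

Section Hilbert.
Variables (R : realType) (V : lmodType R[i]) (ip : V -> V -> R[i]).

Definition is_inner_product : Prop :=
  [/\ (forall (a : R[i]) x y z, ip (a *: x + y) z = a * ip x z + ip y z),
      (forall x y, ip y x = (ip x y)^*),
      (forall x, 0 <= ip x x) &
      (forall x, ip x x = 0 -> x = 0)].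

(* the induced norm ||x|| = sqrt <x,x> (a nonnegative real element of R[i]) *)
Definition hnorm (x : V) : R[i] := sqrtC (ip x x).

Definition converges (u : nat -> V) (l : V) : Prop :=
  forall e : R, 0 < e -> exists N : nat, forall n, (N <= n)%N -> hnorm (u n - l) < e%:C.

Definition cauchy_seq (u : nat -> V) : Prop :=
  forall e : R, 0 < e -> exists N : nat, forall m n, (N <= m)%N -> (N <= n)%N ->
    hnorm (u m - u n) < e%:C.

Definition hilbert_space : Prop :=
  is_inner_product /\ forall u, cauchy_seq u -> exists l, converges u l.

(* a (possibly unbounded) operator with domain *)
Record op := Op { dom : V -> Prop; app : V -> V }.

Definition linear_op (T : op) : Prop :=
  [/\ dom T 0,
      (forall (a : R[i]) x y, dom T x -> dom T y -> dom T (a *: x + y)) &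
      (forall (a : R[i]) x y, dom T x -> dom T y ->
         app T (a *: x + y) = a *: app T x + app T y)].

Definition dense_set (D : V -> Prop) : Prop :=
  forall x (e : R), 0 < e -> exists y, D y /\ hnorm (x - y) < e%:C.

Definition closed_op (T : op) : Prop :=
  forall (u : nat -> V) x y, (forall n, dom T (u n)) ->
    converges u x -> converges (fun n => app T (u n)) y -> dom T x /\ app T x = y.

Definition is_adjoint (S T : op) : Prop :=
  (forall v, dom S v <-> exists w, forall u, dom T u -> ip (app T u) v = ip u w) /\
  (forall u v, dom T u -> dom S v -> ip (app T u) v = ip u (app S v)).

Definition joint_friedrichs (T Tt : op) : Prop :=
  linear_op T /\ linear_op Tt /\
  (forall x, dom T x <-> dom Tt x) /\
  dense_set (dom T) /\
  (forall phi psi, dom T phi -> dom T psi ->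
     ip (app T phi) psi = ip phi (app Tt psi)) /\
  (exists c : R, 0 < c /\ forall phi, dom T phi ->
     hnorm (app T phi + app Tt phi) <= c%:C * hnorm phi) /\
  (exists mu0 : R, 0 < mu0 /\ forall phi, dom T phi ->
     2 * mu0%:C * hnorm phi ^+ 2 <= ip (app T phi + app Tt phi) phi).

Definition joint_closed_friedrichs (T Tt : op) : Prop :=
  [/\ joint_friedrichs T Tt, closed_op T & closed_op Tt].

End Hilbert.

(* Write K := ker Tt1 = (ran T0)^perp.  Approximating v in K by elements of W0 shows that
   K is contained in W and that on K the operator T1 is the bounded extension of T0 + Tt0;
   hence |T1 v| <= c |v| and Re <T1 v, v> >= 2 mu0 |v|^2 there.  Together with
   |T0 u| >= mu0 |u| these estimates make M := T0(W0) + T1(K) a closed subspace of H.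
   If g is orthogonal to M, then g is orthogonal to ran T0, so g lies in K, and
   <T1 g, g> = 0 forces g = 0: thus M = H.  For u in W write T1 u = T0 u0 + T1 nut with
   nut in K; then nu := u - u0 - nut lies in ker T1.  Uniqueness follows from the same
   two estimates applied to a decomposition of 0. *)

From HB Require Import structures.
From mathcomp Require Import all_boot all_order all_algebra.
From mathcomp Require Import complex.
From mathcomp Require Import reals boolp classical_sets.
From mathcomp Require Import ring lra.
Set Implicit Arguments.
Unset Strict Implicit.
Unset Printing Implicit Defensive.
Import Order.TTheory GRing.Theory Num.Theory.
Local Open Scope ring_scope.
Local Open Scope complex_scope.
Local Notation Re := complex.Re.
Local Notation Im := complex.Im.

Section SquaredModulus.
Context {R : realType}.
Implicit Types (x y : R[i]).

Definition sqrmod x : R := Re x ^+ 2 + Im x ^+ 2.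

Lemma sqrmod_ge0 x : 0 <= sqrmod x.
Proof. by rewrite addr_ge0 ?sqr_ge0. Qed.

Lemma sqrmod_eq0 x : sqrmod x = 0 -> x = 0.
Proof.
case: x => a b /eqP; rewrite paddr_eq0 ?sqr_ge0 // !expf_eq0 /=.
by case/andP=> /eqP -> /eqP ->.
Qed.

Lemma sqrmod0 : sqrmod 0 = 0.
Proof. by rewrite /sqrmod expr0n addr0. Qed.

Lemma sqrmodN x : sqrmod (- x) = sqrmod x.
Proof. by rewrite /sqrmod !raddfN !sqrrN. Qed.

Lemma sqr_Re_le_sqrmod x : Re x ^+ 2 <= sqrmod x.
Proof. by rewrite lerDl sqr_ge0. Qed.

Lemma sqrmodD_le x y : sqrmod (x + y) <= 2 * sqrmod x + 2 * sqrmod y.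
Proof.
rewrite /sqrmod !raddfD /=.
have := sqr_ge0 (Re x - Re y); have := sqr_ge0 (Im x - Im y); nra.
Qed.

Lemma ReJ x : Re x^* = Re x.
Proof. by case: x. Qed.

End SquaredModulus.

Section InnerProduct.
Context {R : realType} {V : lmodType R[i]} {ip : V -> V -> R[i]}.
Hypothesis ipP : is_inner_product ip.
Implicit Types (x y z : V) (a : R[i]) (r s : R).

Lemma ipJ x y : ip y x = (ip x y)^*.
Proof. by case: ipP. Qed.

Lemma ipDl x y z : ip (x + y) z = ip x z + ip y z.
Proof. by case: ipP => ipDZ _ _ _; rewrite -{1}[x]scale1r ipDZ mul1r. Qed.

Lemma ip0l z : ip 0 z = 0.
Proof. by apply: (addrI (ip 0 z)); rewrite -ipDl !addr0. Qed.

Lemma ipZl a x z : ip (a *: x) z = a * ip x z.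
Proof. by case: ipP => ipDZ _ _ _; rewrite -[a *: x]addr0 ipDZ ip0l addr0. Qed.

Lemma ipNl x z : ip (- x) z = - ip x z.
Proof. by rewrite -scaleN1r ipZl mulN1r. Qed.

Lemma ipBl x y z : ip (x - y) z = ip x z - ip y z.
Proof. by rewrite ipDl ipNl. Qed.

Lemma ip0r z : ip z 0 = 0.
Proof. by rewrite ipJ ip0l conjc0. Qed.

Lemma ipDr x y z : ip z (x + y) = ip z x + ip z y.
Proof. by rewrite ipJ ipDl rmorphD /= -!ipJ. Qed.

Lemma ipZr a x z : ip z (a *: x) = a^* * ip z x.
Proof. by rewrite ipJ ipZl rmorphM /= -ipJ. Qed.

Lemma ipNr x z : ip z (- x) = - ip z x.
Proof. by rewrite ipJ ipNl rmorphN /= -ipJ. Qed.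

Lemma ipBr x y z : ip z (x - y) = ip z x - ip z y.
Proof. by rewrite ipDr ipNr. Qed.

Lemma Re_ipC x y : Re (ip y x) = Re (ip x y).
Proof. by rewrite ipJ ReJ. Qed.

Definition sqnorm x := Re (ip x x).

Lemma ip_sqnorm x : ip x x = (sqnorm x)%:C.
Proof.
case: ipP => _ _ ip_ge0 _; have := ip_ge0 x; rewrite /sqnorm.
by case: (ip x x) => a b; rewrite lecE /= => /andP[/eqP -> _].
Qed.

Lemma sqnorm_ge0 x : 0 <= sqnorm x.
Proof. by case: ipP => _ _ ip_ge0 _; have := ip_ge0 x; rewrite ip_sqnorm lecR. Qed.

Lemma sqnorm_eq0 x : sqnorm x = 0 -> x = 0.
Proof. by case: ipP => _ _ _ ip_eq0 h; apply: ip_eq0; rewrite ip_sqnorm h. Qed.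

Lemma sqnorm0 : sqnorm 0 = 0.
Proof. by rewrite /sqnorm ip0l. Qed.

Lemma sqnormN x : sqnorm (- x) = sqnorm x.
Proof. by rewrite /sqnorm ipNl ipNr opprK. Qed.

Lemma sqnormD x y : sqnorm (x + y) = sqnorm x + sqnorm y + 2 * Re (ip x y).
Proof. by rewrite /sqnorm ipDl !ipDr !raddfD /= (Re_ipC x y); lra. Qed.

Lemma sqnormB x y : sqnorm (x - y) = sqnorm x + sqnorm y - 2 * Re (ip x y).
Proof. by rewrite /sqnorm ipBl !ipBr !raddfB /= (Re_ipC x y); lra. Qed.

Lemma sqnormZ_real r x : sqnorm (r%:C *: x) = r ^+ 2 * sqnorm x.
Proof. by rewrite /sqnorm ipZl ipZr !ip_sqnorm /=; simpc; rewrite /= mulrA expr2. Qed.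

Lemma parallelogram x y : sqnorm (x + y) + sqnorm (x - y) = 2 * sqnorm x + 2 * sqnorm y.
Proof. by rewrite sqnormD sqnormB; lra. Qed.

Lemma sqnorm_sub_proj x y s :
  sqnorm (x - (s%:C * ip x y) *: y)
  = sqnorm x - 2 * s * sqrmod (ip x y) + s ^+ 2 * sqrmod (ip x y) * sqnorm y.
Proof.
rewrite sqnormB /sqnorm !ipZl !ipZr (ip_sqnorm y) -/(sqnorm x) -/(sqnorm y).
by case: (ip x y) => a b /=; simpc; rewrite /sqrmod /=; ring.
Qed.

(* Cauchy-Schwarz: take s = 1 / sqnorm y in sqnorm_sub_proj. *)
Lemma sqrmod_ip_le x y : sqrmod (ip x y) <= sqnorm x * sqnorm y.
Proof.
have [/sqnorm_eq0 ->|nz] := eqVneq (sqnorm y) 0.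
  by rewrite ip0r sqnorm0 mulr0 sqrmod0.
set t := (sqnorm y)^-1; have ty : t * sqnorm y = 1 by rewrite mulVf.
have := sqnorm_ge0 (x - (t%:C * ip x y) *: y).
rewrite sqnorm_sub_proj; set q := sqrmod _ => h.
have -> : q = q * t * sqnorm y by rewrite -mulrA ty mulr1.
apply: ler_wpM2r; first exact: sqnorm_ge0.
have e : t ^+ 2 * q * sqnorm y = q * t * (t * sqnorm y) by ring.
by move: h; rewrite e ty mulr1; lra.
Qed.

Definition vnorm x := Num.sqrt (sqnorm x).

Lemma vnorm_ge0 x : 0 <= vnorm x.
Proof. exact: sqrtr_ge0. Qed.

Lemma sqr_vnorm x : vnorm x ^+ 2 = sqnorm x.
Proof. by rewrite sqr_sqrtr ?sqnorm_ge0. Qed.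

Lemma vnorm0 : vnorm 0 = 0.
Proof. by rewrite /vnorm sqnorm0 sqrtr0. Qed.

Lemma vnorm_eq0 x : vnorm x = 0 -> x = 0.
Proof. by move=> h; apply: sqnorm_eq0; rewrite -sqr_vnorm h expr0n. Qed.

Lemma vnorm_le0 k x : 0 < k -> k * vnorm x <= 0 -> x = 0.
Proof.
move=> k_gt0; rewrite pmulr_rle0 // => le0; apply: vnorm_eq0.
by apply/eqP; rewrite eq_le le0 vnorm_ge0.
Qed.

Lemma vnormN x : vnorm (- x) = vnorm x.
Proof. by rewrite /vnorm sqnormN. Qed.

Lemma vnorm_distC x y : vnorm (x - y) = vnorm (y - x).
Proof. by rewrite -vnormN opprB. Qed.

Lemma vnorm_le_sqnorm k x y : 0 <= k ->
  (vnorm x <= k * vnorm y) = (sqnorm x <= k ^+ 2 * sqnorm y).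
Proof.
move=> k_ge0; rewrite -!sqr_vnorm -exprMn ler_pXn2r // nnegrE ?vnorm_ge0 //.
by rewrite mulr_ge0 ?vnorm_ge0.
Qed.

Lemma Re_ip_le x y : Re (ip x y) <= vnorm x * vnorm y.
Proof.
have := sqrmod_ip_le x y; rewrite -!sqr_vnorm -exprMn.
have := sqr_Re_le_sqrmod (ip x y); have := mulr_ge0 (vnorm_ge0 x) (vnorm_ge0 y).
by set r := Re _; set P := _ * _; nra.
Qed.

Lemma vnormD_le x y : vnorm (x + y) <= vnorm x + vnorm y.
Proof.
have := sqnormD x y; rewrite -!sqr_vnorm.
have := Re_ip_le x y; have := vnorm_ge0 x; have := vnorm_ge0 y; have := vnorm_ge0 (x + y).
nra.
Qed.

Lemma hnormE x : hnorm ip x = (vnorm x)%:C.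
Proof. by rewrite /hnorm ip_sqnorm -sqr_vnorm rmorphXn sqrCK // ler0c vnorm_ge0. Qed.

End InnerProduct.
Arguments sqnorm {R V} ip x.
Arguments vnorm {R V} ip x.
Arguments vnorm_ge0 {R V} ip x.

Section NullSequences.
Context {R : realType}.
Implicit Types (a b : nat -> R) (k x y : R).

Definition null_seq a :=
  forall e : R, 0 < e -> exists M : nat, forall n, (M <= n)%N -> a n < e.

Lemma null_seqD a b : null_seq a -> null_seq b -> null_seq (fun n => a n + b n).
Proof.
move=> ha hb e e0; have e2 : 0 < e / 2 by rewrite divr_gt0.
have [Ma Ha] := ha _ e2; have [Mb Hb] := hb _ e2.
exists (maxn Ma Mb) => n; rewrite geq_max => /andP[/Ha + /Hb]; lra.
Qed.

Lemma null_seqZ k a : 0 <= k -> null_seq a -> null_seq (fun n => k * a n).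
Proof.
move=> k0 ha e e0; have ek : 0 < e / (k + 1) by rewrite divr_gt0 // ltr_pwDr.
have [M HM] := ha _ ek; exists M => n /HM lt_an.
have : k * (e / (k + 1)) < e by rewrite mulrA ltr_pdivrMr ?ltr_pwDr //; nra.
by have := ler_wpM2l k0 (ltW lt_an); lra.
Qed.

Lemma null_seq_le a b : (forall n, b n <= a n) -> null_seq a -> null_seq b.
Proof.
move=> le_ba ha e e0; have [M HM] := ha _ e0.
by exists M => n /HM; apply: le_lt_trans.
Qed.

Lemma null_seqM a b : (forall n, 0 <= b n) ->
  null_seq a -> null_seq b -> null_seq (fun n => a n * b n).
Proof.
move=> b_ge0 ha hb e e0; have [Ma Ha] := ha _ ltr01; have [Mb Hb] := hb _ e0.
exists (maxn Ma Mb) => n; rewrite geq_max => /andP[/Ha + /Hb].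
by have := b_ge0 n; nra.
Qed.

Lemma null_seq_inv : null_seq (fun n => n.+1%:R^-1).
Proof.
move=> e e0; exists (Num.truncn e^-1) => n le_en.
rewrite -[e]invrK ltf_pV2 ?posrE ?invr_gt0 ?ltr0n //.
by apply: lt_le_trans (truncnS_gt _) _; rewrite ler_nat ltnS.
Qed.

Lemma null_seq_sqrt a : (forall n, 0 <= a n) -> null_seq a ->
  null_seq (fun n => Num.sqrt (a n)).
Proof.
move=> a_ge0 ha e e0; have [M HM] := ha (e ^+ 2) (exprn_gt0 2 e0).
by exists M => n /HM; rewrite -ltr_sqrt ?exprn_gt0 // sqrtr_sqr gtr0_norm.
Qed.

Lemma le_null_seq x y a : null_seq a -> (forall n, x <= y + a n) -> x <= y.
Proof.
move=> ha h; apply/ler_addgt0Pr => e e0.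
by have [M /(_ M (leqnn M))] := ha _ e0; have := h M; lra.
Qed.

Definition rcvg (a : nat -> R) x := null_seq (fun n => (a n - x) ^+ 2).

Lemma rcvgD_inv x : rcvg (fun n => x + n.+1%:R^-1) x.
Proof.
have inv_ge0 n : 0 <= n.+1%:R^-1 :> R by rewrite invr_ge0.
apply: null_seq_le (null_seqM inv_ge0 null_seq_inv null_seq_inv) => n.
by rewrite addrAC subrr add0r expr2.
Qed.

Lemma rcvg_le a b x y : rcvg a x -> rcvg b y -> (forall n, a n <= b n) -> x <= y.
Proof.
move=> /(null_seq_sqrt (fun=> sqr_ge0 _)) ha /(null_seq_sqrt (fun=> sqr_ge0 _)) hb le_ab.
apply: le_null_seq (null_seqD ha hb) _ => n /=; rewrite !sqrtr_sqr.
have := le_ab n; have := ler_norm (x - a n); have := ler_norm (b n - y).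
by rewrite [`|a n - x|]distrC; lra.
Qed.

Lemma rcvgZ k a x : rcvg a x -> rcvg (fun n => k * a n) (k * x).
Proof.
move=> /(null_seqZ (sqr_ge0 k)); apply: null_seq_le => n.
by rewrite -mulrBr exprMn.
Qed.

End NullSequences.

Section Convergence.
Context {R : realType} {V : lmodType R[i]} {ip : V -> V -> R[i]}.
Hypothesis HH : hilbert_space ip.
Let ipP : is_inner_product ip. Proof. by case: HH. Qed.
Local Notation sqnorm := (sqnorm ip).
Local Notation vnorm := (vnorm ip).
Implicit Types (u w : nat -> V) (z : nat -> R[i]).

Definition vcvg u l := null_seq (fun n => vnorm (u n - l)).

Definition vcauchy u := forall e : R, 0 < e -> exists M : nat,
  forall m n, (M <= m)%N -> (M <= n)%N -> vnorm (u m - u n) < e.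

Definition ccvg z l := null_seq (fun n => sqrmod (z n - l)).

Lemma convergesE u l : converges ip u l <-> vcvg u l.
Proof.
by split=> h e /h[M HM]; exists M => n /HM; rewrite (hnormE ipP) ltcR.
Qed.

Lemma vcauchy_cvg u : vcauchy u -> exists l, vcvg u l.
Proof.
move=> hu; case: HH => _ /(_ u) [e /hu[M HM]|l /convergesE]; last by exists l.
by exists M => m n /HM /[apply]; rewrite (hnormE ipP) ltcR.
Qed.

Lemma vcvg_cauchy u l : vcvg u l -> vcauchy u.
Proof.
move=> hu e e0; have [M HM] : exists M, forall n, (M <= n)%N -> vnorm (u n - l) < e / 2.
  by apply: hu; rewrite divr_gt0.
exists M => m n /HM hm /HM hn.
have := vnormD_le ipP (u m - l) (l - u n).
by rewrite addrA subrK (vnorm_distC ipP l); lra.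
Qed.

Lemma vcauchy_le k u w : 0 < k ->
  (forall m n, k * vnorm (u m - u n) <= vnorm (w m - w n)) -> vcauchy w -> vcauchy u.
Proof.
move=> k_gt0 le_uw hw e e0; have [M HM] := hw _ (mulr_gt0 k_gt0 e0).
exists M => m n /HM /[apply] lt_w.
by rewrite -(ltr_pM2l k_gt0); apply: le_lt_trans (le_uw m n) lt_w.
Qed.

Lemma vcvg_cst l : vcvg (fun=> l) l.
Proof. by move=> e e0; exists 0%N => n _; rewrite subrr vnorm0. Qed.

Lemma vcvgB u w a b : vcvg u a -> vcvg w b -> vcvg (fun n => u n - w n) (a - b).
Proof.
move=> hu hw; apply: null_seq_le (null_seqD hu hw) => n.
have -> : u n - w n - (a - b) = (u n - a) + - (w n - b).
  by rewrite !opprD !opprK addrACA.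
by rewrite -[vnorm (w n - b)](vnormN ipP) vnormD_le.
Qed.

Lemma vcvg_sqnorm u l : vcvg u l -> null_seq (fun n => sqnorm (u n - l)).
Proof.
move=> hu; apply: null_seq_le (null_seqM (fun=> vnorm_ge0 _ _) hu hu) => n /=.
by rewrite -(sqr_vnorm ipP) expr2.
Qed.

Lemma ccvg_ip u w a b : vcvg u a -> vcvg w b ->
  ccvg (fun n => ip (u n) (w n)) (ip a b).
Proof.
move=> /vcvg_sqnorm hu /vcvg_sqnorm hw.
have ge0 := sqnorm_ge0 ipP.
have bound : null_seq (fun n => 4 * (sqnorm (u n - a) * sqnorm (w n - b))
    + 4 * sqnorm b * sqnorm (u n - a) + 2 * sqnorm a * sqnorm (w n - b)).
  apply: null_seqD; first apply: null_seqD.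
  - by apply: null_seqZ => //; apply: null_seqM.
  - by apply: null_seqZ; rewrite ?mulr_ge0.
  - by apply: null_seqZ; rewrite ?mulr_ge0.
apply: null_seq_le bound => n /=.
have -> : ip (u n) (w n) - ip a b =
    ip (u n - a) (w n - b) + ip (u n - a) b + ip a (w n - b).
  by rewrite !(ipBl ipP) !(ipBr ipP); ring.
have := sqrmodD_le (ip (u n - a) (w n - b) + ip (u n - a) b) (ip a (w n - b)).
have := sqrmodD_le (ip (u n - a) (w n - b)) (ip (u n - a) b).
have := sqrmod_ip_le ipP (u n - a) (w n - b).
have := sqrmod_ip_le ipP (u n - a) b; have := sqrmod_ip_le ipP a (w n - b).
by have := ge0 (u n - a); have := ge0 (w n - b); have := ge0 a; have := ge0 b; lra.
Qed.

Lemma ccvg_unique z a b : ccvg z a -> ccvg z b -> a = b.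
Proof.
move=> ha hb; apply/eqP; rewrite -subr_eq0; apply/eqP/sqrmod_eq0/eqP.
rewrite eq_le sqrmod_ge0 andbT.
apply: le_null_seq (null_seqD (null_seqZ (ler0n _ 2) ha) (null_seqZ (ler0n _ 2) hb)) _.
move=> n; have := sqrmodD_le (a - z n) (z n - b).
by rewrite addrA subrK -(sqrmodN (a - z n)) opprB add0r.
Qed.

Lemma rcvg_Re z l : ccvg z l -> rcvg (fun n => Re (z n)) (Re l).
Proof. by apply: null_seq_le => n; rewrite -raddfB sqr_Re_le_sqrmod. Qed.

Lemma rcvg_sqnorm u l : vcvg u l -> rcvg (fun n => sqnorm (u n)) (sqnorm l).
Proof. by move=> hu; apply: rcvg_Re (ccvg_ip hu hu). Qed.

End Convergence.
Arguments vcvg {R V} ip u l.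
Arguments vcauchy {R V} ip u.

Section Minimizers.
Context {R : realType} {V : lmodType R[i]} {ip : V -> V -> R[i]}.
Hypothesis ipP : is_inner_product ip.
Local Notation sqnorm := (sqnorm ip).

Variable M : V -> Prop.
Hypothesis M0 : M 0.
Hypothesis M_lin : forall a x y, M x -> M y -> M (a *: x + y).

(* Compare f - m with f - (m + s c z) for c := <f - m, z> and s := 1 / (|z|^2 + 1). *)
Lemma minimizer_orthogonal f m : M m ->
  (forall m', M m' -> sqnorm (f - m) <= sqnorm (f - m')) ->
  forall z, M z -> ip z (f - m) = 0.
Proof.
move=> Mm m_min z Mz; set g := f - m; set c := ip g z.
have z_ge0 := sqnorm_ge0 ipP z.
set s := (sqnorm z + 1)^-1.
have s_gt0 : 0 < s by rewrite invr_gt0; lra.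
have sz : s * sqnorm z = 1 - s by rewrite /s; field; rewrite gt_eqF //; lra.
have := m_min _ (M_lin (s%:C * c) Mz Mm).
have -> : f - ((s%:C * c) *: z + m) = g - (s%:C * ip g z) *: z.
  by rewrite /g opprD addrA addrAC.
rewrite (sqnorm_sub_proj ipP) -/c.
have -> : s ^+ 2 * sqrmod c * sqnorm z = s * sqrmod c * (s * sqnorm z) by ring.
rewrite sz => le_g; have c_ge0 := sqrmod_ge0 c.
have c0 : c = 0.
  by apply/sqrmod_eq0/eqP; rewrite eq_le c_ge0 andbT; nra.
by rewrite (ipJ ipP) -/c c0 conjc0.
Qed.

Lemma minimizing_seq_cauchy f d (ms : nat -> V) :
  (forall m, M m -> d <= sqnorm (f - m)) ->
  (forall n, M (ms n) /\ sqnorm (f - ms n) < d + n.+1%:R^-1) ->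
  vcauchy ip ms.
Proof.
move=> d_le hms e e0.
have [K HK] : exists K, forall n, (K <= n)%N -> n.+1%:R^-1 < e ^+ 2 / 4.
  by apply: null_seq_inv; rewrite divr_gt0 ?exprn_gt0.
exists K => m n /HK hm /HK hn.
have [Mm lt_m] := hms m; have [Mn lt_n] := hms n.
pose p := (2^-1 : R)%:C *: (ms m + ms n).
have Mp : M p.
  by rewrite /p -[_ *: _]addr0; apply: M_lin => //; rewrite -[ms m]scale1r; apply: M_lin.
(* The parallelogram law at the midpoint p of ms m and ms n, which lies in M. *)
have := parallelogram ipP (f - ms m) (f - ms n).
have -> : f - ms m + (f - ms n) = (2 : R)%:C *: (f - p).
  rewrite /p scalerBr scalerA -rmorphM /= mulfV ?pnatr_eq0 // scale1r.
  have -> : (2 : R)%:C = 2 :> R[i] by rewrite rmorph_nat.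
  by rewrite scaler_nat mulr2n opprD addrACA.
have -> : f - ms m - (f - ms n) = - (ms m - ms n).
  by rewrite !opprB addrC addrA subrK.
rewrite (sqnormZ_real ipP) (sqnormN ipP) => par.
have le_p := d_le _ Mp.
have : sqnorm (ms m - ms n) < e ^+ 2.
  move: par hm hn lt_m lt_n le_p.
  by set im := m.+1%:R^-1; set in_ := n.+1%:R^-1; set E := e ^+ 2; lra.
by rewrite -(sqr_vnorm ipP) ltr_pXn2r // nnegrE ?vnorm_ge0 ?ltW.
Qed.
End Minimizers.

Section ProjectionTheorem.
Context {R : realType} {V : lmodType R[i]} {ip : V -> V -> R[i]}.
Hypothesis HH : hilbert_space ip.
Let ipP : is_inner_product ip. Proof. by case: HH. Qed.
Local Notation sqnorm := (sqnorm ip).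
Local Open Scope classical_set_scope.

Lemma orthogonal_projection (M : V -> Prop) : M 0 ->
  (forall a x y, M x -> M y -> M (a *: x + y)) ->
  (forall u l, (forall n, M (u n)) -> vcvg ip u l -> M l) ->
  forall f, exists2 m, M m & forall z, M z -> ip z (f - m) = 0.
Proof.
move=> M0 M_lin M_closed f.
pose E := (fun m => sqnorm (f - m)) @` M.
have E_lb : has_lbound E by exists 0 => _ [m _ <-]; exact: sqnorm_ge0.
have E_n0 : E !=set0 by exists (sqnorm (f - 0)), 0.
have d_le m : M m -> inf E <= sqnorm (f - m) by move=> Mm; apply: ge_inf => //; exists m.
have approx n : exists m, M m /\ sqnorm (f - m) < inf E + n.+1%:R^-1.
  have inv_gt0 : 0 < n.+1%:R^-1 :> R by rewrite invr_gt0 ltr0n.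
  by have [_ [m Mm <-] lt_m] := inf_adherent inv_gt0 (conj E_n0 E_lb); exists m.
have [ms hms] := choice approx.
have [m cvg_m] := vcauchy_cvg HH (minimizing_seq_cauchy ipP M0 M_lin d_le hms).
have Mm : M m by apply: M_closed cvg_m => n; case: (hms n).
exists m => //; apply: (minimizer_orthogonal ipP M_lin) => // m' Mm'.
apply: le_trans (d_le _ Mm').
have cvg_fm := vcvgB HH (vcvg_cst HH f) cvg_m.
apply: rcvg_le (rcvg_sqnorm HH cvg_fm) (rcvgD_inv (inf E)) _ => n.
exact: ltW (hms n).2.
Qed.
End ProjectionTheorem.

Section LinearOperators.
Context {R : realType} {V : lmodType R[i]}.
Variable T : op V.
Hypothesis T_lin : linear_op T.
Implicit Types (x y : V) (a : R[i]).

Definition kernel x := dom T x /\ app T x = 0.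

Lemma linear_op0 : dom T 0 /\ app T 0 = 0.
Proof.
case: T_lin => dom0 _ linT; split=> //.
have := linT 1 0 0 dom0 dom0; rewrite !scale1r !addr0 => T00.
by apply: (addrI (app T 0)); rewrite addr0 -T00.
Qed.

Lemma linear_opZD a x y : dom T x -> dom T y ->
  dom T (a *: x + y) /\ app T (a *: x + y) = a *: app T x + app T y.
Proof. by case: T_lin => _ domZD linT dx dy; split; [apply: domZD | apply: linT]. Qed.

Lemma linear_opD x y : dom T x -> dom T y ->
  dom T (x + y) /\ app T (x + y) = app T x + app T y.
Proof. by move=> dx dy; have := linear_opZD 1 dx dy; rewrite !scale1r. Qed.

Lemma linear_opB x y : dom T x -> dom T y ->
  dom T (x - y) /\ app T (x - y) = app T x - app T y.
Proof.
move=> dx dy; have := linear_opZD (-1) dy dx.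
by rewrite !scaleN1r ![- _ + _]addrC.
Qed.

Lemma kernel0 : kernel 0.
Proof. exact: linear_op0. Qed.

Lemma kernelZD a x y : kernel x -> kernel y -> kernel (a *: x + y).
Proof.
move=> [dx Tx] [dy Ty]; have [dxy Txy] := linear_opZD a dx dy.
by split; rewrite // Txy Tx Ty scaler0 addr0.
Qed.

Lemma kernelB x y : kernel x -> kernel y -> kernel (x - y).
Proof. by move=> kx ky; rewrite addrC -scaleN1r; apply: kernelZD. Qed.

End LinearOperators.

Section DenseDomain.
Context {R : realType} {V : lmodType R[i]} {ip : V -> V -> R[i]}.
Hypothesis ipP : is_inner_product ip.
Local Notation sqnorm := (sqnorm ip).
Local Notation vnorm := (vnorm ip).
Variable D : V -> Prop.
Hypothesis D_dense : dense_set ip D.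

Lemma dense_ip_eq x y : (forall u, D u -> ip u x = ip u y) -> x = y.
Proof.
move=> eq_xy; apply/eqP; rewrite -subr_eq0; apply/eqP/(vnorm_eq0 ipP).
set z := x - y; have z_orth u : D u -> ip u z = 0.
  by move=> Du; rewrite (ipBr ipP) eq_xy ?subrr.
apply/eqP; rewrite eq_le vnorm_ge0 andbT; apply/ler_addgt0Pr => e e0; rewrite add0r.
have [u [Du]] := D_dense z e0; rewrite (hnormE ipP) ltcR => lt_zu.
have : sqnorm z <= vnorm (z - u) * vnorm z.
  by have := Re_ip_le ipP (z - u) z; rewrite (ipBl ipP) (z_orth u Du) subr0.
rewrite -(sqr_vnorm ipP) expr2.
have := vnorm_ge0 ip z; have := vnorm_ge0 ip (z - u); nra.
Qed.

Lemma dense_seq x : exists2 u, forall n, D (u n) & vcvg ip u x.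
Proof.
have approx n : exists u, D u /\ vnorm (x - u) < n.+1%:R^-1.
  have inv_gt0 : 0 < n.+1%:R^-1 :> R by rewrite invr_gt0 ltr0n.
  by have [u [Du]] := D_dense x inv_gt0; rewrite (hnormE ipP) ltcR; exists u.
have [u hu] := choice approx; exists u => [n|]; first by case: (hu n).
apply: null_seq_le null_seq_inv => n; rewrite (vnorm_distC ipP).
exact: ltW (hu n).2.
Qed.

Variables (T S : op V).
Hypothesis dom_T : forall x, dom T x <-> D x.
Hypothesis S_adj : is_adjoint ip S T.

Lemma adjoint_app v w : (forall u, D u -> ip (app T u) v = ip u w) ->
  dom S v /\ app S v = w.
Proof.
case: S_adj => dom_S S_T adj_vw.
have dv : dom S v by apply/dom_S; exists w => u /dom_T; apply: adj_vw.
split=> //; apply: dense_ip_eq => u Du.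
by rewrite -S_T ?adj_vw //; apply/dom_T.
Qed.

Lemma adjoint_linear : linear_op S.
Proof.
have S_ZD a x y : dom S x -> dom S y ->
    dom S (a *: x + y) /\ app S (a *: x + y) = a *: app S x + app S y.
  move=> dx dy; apply: adjoint_app => u /dom_T du; case: S_adj => _ S_T.
  by rewrite !(ipDr ipP) !(ipZr ipP) !S_T.
have [dom0 _] : dom S 0 /\ app S 0 = 0 by apply: adjoint_app => u _; rewrite !(ip0r ipP).
by split=> // a x y dx dy; case: (S_ZD a x y dx dy).
Qed.

Lemma adjoint_kernelP g : kernel S g <-> forall u, D u -> ip (app T u) g = 0.
Proof.
split=> [[dg Sg] u Du | g_orth].
  by case: S_adj => _ S_T; rewrite S_T ?Sg ?(ip0r ipP) //; apply/dom_T.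
by apply: adjoint_app => u Du; rewrite g_orth ?(ip0r ipP).
Qed.

End DenseDomain.

Lemma mulr_sqr_le_cancel (R : realFieldType) (k a b : R) :
  0 <= a -> 0 <= b -> k * a ^+ 2 <= b * a -> k * a <= b.
Proof.
move=> a_ge0 b_ge0; have [->|a_neq0] := eqVneq a 0; first by move=> _; rewrite mulr0.
have a_gt0 : 0 < a by rewrite lt_def a_neq0.
by move=> le_ab; rewrite -(ler_pM2r a_gt0) -mulrA -expr2.
Qed.

Section FriedrichsDecomposition.
Context {R : realType} {V : lmodType R[i]} {ip : V -> V -> R[i]}.
Variables (T0 Tt0 T1 Tt1 : op V) (c mu0 : R).
Hypothesis HH : hilbert_space ip.
Hypotheses (T0_lin : linear_op T0) (Tt0_lin : linear_op Tt0).
Hypothesis dom_T0_Tt0 : forall x, dom T0 x <-> dom Tt0 x.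
Hypothesis T0_dense : dense_set ip (dom T0).
Hypothesis formal_adj : forall phi psi, dom T0 phi -> dom T0 psi ->
  ip (app T0 phi) psi = ip phi (app Tt0 psi).
Hypothesis c_gt0 : 0 < c.
Hypothesis sum_bounded : forall phi, dom T0 phi ->
  hnorm ip (app T0 phi + app Tt0 phi) <= c%:C * hnorm ip phi.
Hypothesis mu0_gt0 : 0 < mu0.
Hypothesis sum_coercive : forall phi, dom T0 phi ->
  2 * mu0%:C * hnorm ip phi ^+ 2 <= ip (app T0 phi + app Tt0 phi) phi.
Hypothesis T0_closed : closed_op ip T0.
Hypothesis T1_adj : is_adjoint ip T1 Tt0.
Hypothesis Tt1_adj : is_adjoint ip Tt1 T0.

Let ipP : is_inner_product ip. Proof. by case: HH. Qed.
Let mu2_gt0 : 0 < 2 * mu0. Proof. by rewrite mulr_gt0. Qed.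
Let dom_Tt0_T0 x : dom Tt0 x <-> dom T0 x. Proof. exact: iff_sym. Qed.
Local Notation sqnorm := (sqnorm ip).
Local Notation vnorm := (vnorm ip).
Local Notation W0 := (dom T0).
Local Notation K := (kernel Tt1).
Local Notation S0 phi := (app T0 phi + app Tt0 phi).

Lemma T0_sub_T1 phi : W0 phi -> dom T1 phi /\ app T1 phi = app T0 phi.
Proof.
move=> W0phi; apply: (adjoint_app ipP T0_dense dom_Tt0_T0 T1_adj) => u W0u.
by rewrite (ipJ ipP phi) -formal_adj // -(ipJ ipP).
Qed.

Let T1_lin : linear_op T1 := adjoint_linear ipP T0_dense dom_Tt0_T0 T1_adj.
Let Tt1_lin : linear_op Tt1 := adjoint_linear ipP T0_dense (fun=> iff_refl _) Tt1_adj.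

Lemma kernel_Tt1P g : K g <-> forall u, W0 u -> ip (app T0 u) g = 0.
Proof. exact: (adjoint_kernelP ipP T0_dense (fun=> iff_refl _) Tt1_adj). Qed.

Lemma S0_bounded phi : W0 phi -> vnorm (S0 phi) <= c * vnorm phi.
Proof. by move/sum_bounded; rewrite !(hnormE ipP) -rmorphM lecR. Qed.

Lemma S0_coercive phi : W0 phi -> 2 * mu0 * sqnorm phi <= Re (ip (S0 phi) phi).
Proof.
move/sum_coercive; rewrite (hnormE ipP) -rmorphXn (sqr_vnorm ipP).
by rewrite -[2 : R[i]](rmorph_nat (real_complex R)) -!rmorphM lecE => /andP[].
Qed.

Lemma S0_sym u w : W0 u -> W0 w -> ip (S0 u) w = ip u (S0 w).
Proof.
move=> W0u W0w; rewrite (ipDl ipP) (ipDr ipP) formal_adj // addrC; congr (_ + _).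
by rewrite (ipJ ipP w (app Tt0 u)) -formal_adj // -(ipJ ipP).
Qed.

Lemma S0B x y : W0 x -> W0 y -> W0 (x - y) /\ S0 (x - y) = S0 x - S0 y.
Proof.
move=> W0x W0y; have [W0xy ->] := linear_opB T0_lin W0x W0y.
have [_ ->] := linear_opB Tt0_lin (proj1 (dom_T0_Tt0 x) W0x) (proj1 (dom_T0_Tt0 y) W0y).
by rewrite opprD addrACA.
Qed.

Lemma T0_bounded_below u : W0 u -> mu0 * vnorm u <= vnorm (app T0 u).
Proof.
move=> W0u; apply: mulr_sqr_le_cancel; rewrite ?vnorm_ge0 //.
have := S0_coercive W0u.
rewrite (ipDl ipP) raddfD /= (ipJ ipP u (app Tt0 u)) -formal_adj // ReJ.
by rewrite (sqr_vnorm ipP); have := Re_ip_le ipP (app T0 u) u; lra.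
Qed.

(* For v in ker Tt1, T0 u is orthogonal to v, so <Tt0 u, v> = <(T0 + Tt0) u, v>:
   on ker Tt1, T1 is the bounded extension of T0 + Tt0. *)
Lemma T1_kernel_lim v phi b : K v -> (forall n, W0 (phi n)) ->
  vcvg ip phi v -> vcvg ip (fun n => S0 (phi n)) b -> dom T1 v /\ app T1 v = b.
Proof.
move=> Kv W0phi cvg_phi cvg_b.
apply: (adjoint_app ipP T0_dense dom_Tt0_T0 T1_adj) => u W0u.
have <- : ip (S0 u) v = ip u b.
  apply: (ccvg_unique (ccvg_ip HH (vcvg_cst HH (S0 u)) cvg_phi)).
  apply: null_seq_le (ccvg_ip HH (vcvg_cst HH u) cvg_b) => n /=.
  by rewrite S0_sym.
by rewrite (ipDl ipP) (proj1 (kernel_Tt1P v) Kv u W0u) add0r.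
Qed.

Lemma kernel_Tt1_approx v : K v -> dom T1 v /\ exists2 phi, (forall n, W0 (phi n)) &
  vcvg ip phi v /\ vcvg ip (fun n => S0 (phi n)) (app T1 v).
Proof.
move=> Kv; have [phi W0phi cvg_phi] := dense_seq ipP T0_dense v.
have c_inv_gt0 : 0 < c^-1 by rewrite invr_gt0.
have [b cvg_b] : exists b, vcvg ip (fun n => S0 (phi n)) b.
  apply/(vcauchy_cvg HH)/(vcauchy_le c_inv_gt0 _ (vcvg_cauchy HH cvg_phi)) => m n.
  by have [W0mn <-] := S0B (W0phi m) (W0phi n); rewrite ler_pdivrMl // S0_bounded.
have [dv T1v] := T1_kernel_lim Kv W0phi cvg_phi cvg_b.
by split=> //; exists phi; rewrite ?T1v.
Qed.

Lemma kernel_Tt1_sub_dom_T1 v : K v -> dom T1 v.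
Proof. by case/kernel_Tt1_approx. Qed.

Lemma T1_kernel_bounded v : K v -> vnorm (app T1 v) <= c * vnorm v.
Proof.
move=> /kernel_Tt1_approx[_ [phi W0phi [cvg_phi cvg_S0]]].
rewrite (vnorm_le_sqnorm ipP _ _ (ltW c_gt0)).
apply: rcvg_le (rcvg_sqnorm HH cvg_S0) (rcvgZ _ (rcvg_sqnorm HH cvg_phi)) _ => n.
by rewrite -(vnorm_le_sqnorm ipP _ _ (ltW c_gt0)) S0_bounded.
Qed.

Lemma T1_kernel_coercive v : K v -> 2 * mu0 * sqnorm v <= Re (ip (app T1 v) v).
Proof.
move=> /kernel_Tt1_approx[_ [phi W0phi [cvg_phi cvg_S0]]].
apply: rcvg_le (rcvgZ _ (rcvg_sqnorm HH cvg_phi))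
  (rcvg_Re (ccvg_ip HH cvg_S0 cvg_phi)) _ => n.
exact: S0_coercive.
Qed.

Lemma range_sum_bounded_below u w : W0 u -> K w ->
  2 * mu0 * vnorm w <= vnorm (app T0 u + app T1 w).
Proof.
move=> W0u Kw; apply: mulr_sqr_le_cancel; rewrite ?vnorm_ge0 // (sqr_vnorm ipP).
apply: le_trans (T1_kernel_coercive Kw) _.
have := Re_ip_le ipP (app T0 u + app T1 w) w.
by rewrite (ipDl ipP) raddfD /= (proj1 (kernel_Tt1P w) Kw u W0u) add0r.
Qed.

Lemma kernel_Tt1_closed w l : (forall n, K (w n)) -> vcvg ip w l -> K l.
Proof.
move=> Kw cvg_w; apply/kernel_Tt1P => u W0u.
apply: (ccvg_unique (ccvg_ip HH (vcvg_cst HH (app T0 u)) cvg_w)) => e e0.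
by exists 0%N => n _; rewrite (proj1 (kernel_Tt1P _) (Kw n) u W0u) subrr sqrmod0.
Qed.

Lemma T1_kernel_cvg w l : (forall n, K (w n)) -> vcvg ip w l ->
  vcvg ip (fun n => app T1 (w n)) (app T1 l).
Proof.
move=> Kw cvg_w; have Kl := kernel_Tt1_closed Kw cvg_w.
apply: null_seq_le (null_seqZ (ltW c_gt0) cvg_w) => n /=.
have [_ <-] := linear_opB T1_lin (kernel_Tt1_sub_dom_T1 (Kw n)) (kernel_Tt1_sub_dom_T1 Kl).
exact: T1_kernel_bounded (kernelB Tt1_lin (Kw n) Kl).
Qed.

Lemma T0_range_closed u f : (forall n, W0 (u n)) ->
  vcvg ip (fun n => app T0 (u n)) f -> exists2 x, W0 x & app T0 x = f.
Proof.
move=> W0u cvg_f; have [x cvg_x] : exists x, vcvg ip u x.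
  apply/(vcauchy_cvg HH)/(vcauchy_le mu0_gt0 _ (vcvg_cauchy HH cvg_f)) => m n.
  by have [W0mn <-] := linear_opB T0_lin (W0u m) (W0u n); apply: T0_bounded_below.
have [] := T0_closed W0u ((convergesE HH _ _).2 cvg_x) ((convergesE HH _ _).2 cvg_f).
by exists x.
Qed.

Definition range_sum g :=
  exists p : V * V, [/\ W0 p.1, K p.2 & g = app T0 p.1 + app T1 p.2].

Lemma range_sum0 : range_sum 0.
Proof.
exists (0, 0); split; [exact: (linear_op0 T0_lin).1 | exact: kernel0 |].
by rewrite (linear_op0 T0_lin).2 (linear_op0 T1_lin).2 addr0.
Qed.

Lemma range_sumZD a x y : range_sum x -> range_sum y -> range_sum (a *: x + y).
Proof.
move=> [[u w] [/= W0u Kw ->]] [[u' w'] [/= W0u' Kw' ->]].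
have [W0uu' T0uu'] := linear_opZD T0_lin a W0u W0u'.
have [_ T1ww'] := linear_opZD T1_lin a (kernel_Tt1_sub_dom_T1 Kw) (kernel_Tt1_sub_dom_T1 Kw').
exists (a *: u + u', a *: w + w'); split=> //=; first exact: kernelZD.
by rewrite T0uu' T1ww' scalerDr addrACA.
Qed.

Lemma range_sum_closed g_ g : (forall n, range_sum (g_ n)) -> vcvg ip g_ g -> range_sum g.
Proof.
move=> /choice[p hp] cvg_g.
have W0u n : W0 (p n).1 by case: (hp n).
have Kw n : K (p n).2 by case: (hp n).
have g_E n : g_ n = app T0 (p n).1 + app T1 (p n).2 by case: (hp n).
have [w cvg_w] : exists w, vcvg ip (fun n => (p n).2) w.
  apply/(vcauchy_cvg HH)/(vcauchy_le mu2_gt0 _ (vcvg_cauchy HH cvg_g)) => m n.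
  have [W0mn T0mn] := linear_opB T0_lin (W0u m) (W0u n).
  have [_ T1mn] :=
    linear_opB T1_lin (kernel_Tt1_sub_dom_T1 (Kw m)) (kernel_Tt1_sub_dom_T1 (Kw n)).
  rewrite !g_E opprD addrACA -T0mn -T1mn.
  exact: range_sum_bounded_below W0mn (kernelB Tt1_lin (Kw m) (Kw n)).
have [u W0u_ T0u] : exists2 u, W0 u & app T0 u = g - app T1 w.
  apply: (T0_range_closed W0u).
  by apply: null_seq_le (vcvgB HH cvg_g (T1_kernel_cvg Kw cvg_w)) => n; rewrite g_E addrK.
by exists (u, w); split=> //=; [exact: kernel_Tt1_closed Kw cvg_w | rewrite T0u subrK].
Qed.

Lemma range_sum_full f : range_sum f.
Proof.
have [m Mm m_orth] := orthogonal_projection HH range_sum0 range_sumZD range_sum_closed f.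
set g := f - m in m_orth.
have Kg : K g.
  apply/kernel_Tt1P => u W0u; apply: m_orth; exists (u, 0); split=> //=.
    exact: kernel0.
  by rewrite (linear_op0 T1_lin).2 addr0.
have T1g_g : ip (app T1 g) g = 0.
  apply: m_orth; exists (0, g); split=> //=; first exact: (linear_op0 T0_lin).1.
  by rewrite (linear_op0 T0_lin).2 add0r.
have g0 : g = 0.
  apply: (sqnorm_eq0 ipP); apply/eqP; rewrite eq_le (sqnorm_ge0 ipP) andbT.
  by have := T1_kernel_coercive Kg; rewrite T1g_g pmulr_rle0.
by rewrite -(subrK m f) -/g g0 add0r.
Qed.

Lemma decomposition_exists u : dom T1 u ->
  exists u0 nu nut, [/\ W0 u0, kernel T1 nu, K nut & u = u0 + nu + nut].
Proof.
move=> du; have [[u0 w] [/= W0u0 Kw T1u]] := range_sum_full (app T1 u).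
have [du0 T1u0] := T0_sub_T1 W0u0.
have [d1 e1] := linear_opB T1_lin du du0.
have [d2 e2] := linear_opB T1_lin d1 (kernel_Tt1_sub_dom_T1 Kw).
exists u0, (u - u0 - w), w; split=> //.
  by split=> //; rewrite e2 e1 T1u T1u0 [app T0 u0 + _]addrC addrK subrr.
by rewrite addrA subrK addrC subrK.
Qed.

Lemma decomposition_zero u0 nu nut : W0 u0 -> kernel T1 nu -> K nut ->
  u0 + nu + nut = 0 -> [/\ u0 = 0, nu = 0 & nut = 0].
Proof.
move=> W0u0 [dnu T1nu] Knut sum0.
have [du0 T1u0] := T0_sub_T1 W0u0.
have T0u0_T1nut : app T0 u0 + app T1 nut = 0.
  have [d1 e1] := linear_opD T1_lin du0 dnu.
  have [_ e2] := linear_opD T1_lin d1 (kernel_Tt1_sub_dom_T1 Knut).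
  by move: e2; rewrite e1 T1nu addr0 sum0 (linear_op0 T1_lin).2 T1u0 => <-.
have nut0 : nut = 0.
  apply: (vnorm_le0 ipP mu2_gt0); rewrite -(vnorm0 ipP) -T0u0_T1nut.
  exact: range_sum_bounded_below.
have u00 : u0 = 0.
  apply: (vnorm_le0 ipP mu0_gt0); rewrite -(vnorm0 ipP) -T0u0_T1nut nut0.
  by rewrite (linear_op0 T1_lin).2 addr0; apply: T0_bounded_below.
by split=> //; move: sum0; rewrite u00 nut0 add0r addr0.
Qed.

Lemma friedrichs_decomposition :
  (forall u, dom T1 u <->
     exists u0 nu nut, [/\ W0 u0, kernel T1 nu, K nut & u = u0 + nu + nut]) /\
  (forall u, dom T1 u ->
     exists! t : V * V * V, [/\ W0 t.1.1, kernel T1 t.1.2, K t.2 & u = t.1.1 + t.1.2 + t.2]).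
Proof.
split=> [u|u du].
  split=> [|[u0 [nu [nut [W0u0 [dnu _] Knut ->]]]]]; first exact: decomposition_exists.
  have [d1 _] := linear_opD T1_lin (T0_sub_T1 W0u0).1 dnu.
  by case: (linear_opD T1_lin d1 (kernel_Tt1_sub_dom_T1 Knut)).
have [u0 [nu [nut [W0u0 Knu Knut u_E]]]] := decomposition_exists du.
exists (u0, nu, nut); split=> // -[[u0' nu'] nut'] /= [W0u0' Knu' Knut' u_E'].
have sum0 : (u0' - u0) + (nu' - nu) + (nut' - nut) = 0.
  by rewrite -(subrr u) {1}u_E' u_E !opprD [RHS]addrACA [u0' + nu' + _]addrACA.
have [d0 dnu dnut] := decomposition_zero (linear_opB T0_lin W0u0' W0u0).1
  (kernelB T1_lin Knu' Knu) (kernelB Tt1_lin Knut' Knut) sum0.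
by rewrite (subr0_eq d0) (subr0_eq dnu) (subr0_eq dnut).
Qed.

End FriedrichsDecomposition.

Theorem theorem3p1 (R : realType) (V : lmodType R[i]) (ip : V -> V -> R[i])
  (T0 Tt0 T1 Tt1 : op V) :
  hilbert_space ip ->
  joint_closed_friedrichs ip T0 Tt0 ->
  is_adjoint ip T1 Tt0 ->
  is_adjoint ip Tt1 T0 ->
  (forall u, dom T1 u <->
     exists u0 nu nut, [/\ dom T0 u0, dom T1 nu /\ app T1 nu = 0,
                           dom Tt1 nut /\ app Tt1 nut = 0 & u = u0 + nu + nut]) /\
  (forall u, dom T1 u ->
     exists! t : V * V * V,
       [/\ dom T0 t.1.1, dom T1 t.1.2 /\ app T1 t.1.2 = 0,
           dom Tt1 t.2 /\ app Tt1 t.2 = 0 & u = t.1.1 + t.1.2 + t.2]).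
Proof.
move=> HH [[T0_lin [Tt0_lin [dom_T0_Tt0 [T0_dense [formal_adj [[c [c_gt0 sum_bounded]]
  [mu0 [mu0_gt0 sum_coercive]]]]]]]] T0_closed _] T1_adj Tt1_adj.
exact: (friedrichs_decomposition HH T0_lin Tt0_lin dom_T0_Tt0 T0_dense formal_adj c_gt0
  sum_bounded mu0_gt0 sum_coercive T0_closed T1_adj Tt1_adj).
Qed.
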